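(* Fix $n\ge-1$. For every $m\ge1$ and every $m$-generator $x=\langle i_0,\dots,i_m\rangle$ of $\mathcal O_n$ (with $0\le i_0<\cdots<i_m\le n$), writing $x\delta^j_m=\langle i_0,\dots,\widehat{i_j},\dots,i_m\rangle$ for the $(m-1)$-generator obtained by deleting $i_j$, we have in $\lambda(\mathcal O_n)_{m-1}$: $$[s(x)]=\sum_{\substack{0\le j\le m\\ j\text{ odd}}}[x\delta^j_m],\qquad [t(x)]=\sum_{\substack{0\le j\le m\\ j\text{ even}}}[x\delta^j_m].$$
   Context: All $\omega$-categories are strict and globular; for an $m$-cell $x$, $s(x),t(x)$ are its source and target, $s_i,t_i$ iterated ones. An expansion on an $\omega$-category $C$ consists of a $0$-cell $o$ and, for each $k$-cell $x$, a $(k+1)$-cell $\xi_x$ with $\xi_x:o\to x$ if $k=0$ and $\xi_x:\xi_{t(x)}\to x\star_0\xi_{s_0(x)}\star_1\cdots\star_{k-1}\xi_{s_{k-1}(x)}$ if $k>0$ ($\star_p$ the $p$-composition, lower-dimensional cells standing for iterated identities, composites bracketed giving priority to the lowest-dimensional composition), satisfying $\xi_{y\star_p x}=t_{p+1}(y)\star_0\xi_{s_0(x)}\star_1\cdots\star_{p-1}\xi_{s_{p-1}(x)}\star_p\xi_x\star_{p+1}\xi_y$, $\xi_{1_u}=1_{\xi_u}$, $\xi_{\xi_u}=1_{\xi_u}$, $\xi_o=1_o$. $T=UF$ is the monad on $\omega\mathbf{Cat}$ induced by the forgetful functor $U$ from $\omega$-categories with expansion (morphisms preserving $o$ and $\xi$)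 and its left adjoint $F$, with unit $\eta$. $\mathcal O_k=T^{k+1}(\emptyset)$ for $k\ge-1$ ($\mathcal O_{-1}=\emptyset$); $o_k$ and $\xi$ are the origin and expansion of $\mathcal O_k$ ($k\ge0$); $\eta^i:\mathcal O_k\to\mathcal O_{k+i}$ is the composite of units. For $0\le i_0\le\cdots\le i_m\le n$ the cell $\langle i_0,\dots,i_m\rangle$ of $\mathcal O_n$ is defined inductively by $\langle i\rangle=\eta^i(o_{n-i})$ and $\langle i_0,\dots,i_m\rangle=\eta^{i_0}(\xi_{\langle i_1-i_0,\dots,i_m-i_0\rangle})$ (inner cell in $\mathcal O_{n-i_0}$, $\xi$ the expansion of $\mathcal O_{n-i_0}$); the cells with $i_0<\cdots<i_m$ are exactly the $m$-generators of the polygraph freely generating $\mathcal O_n$, so they correspond to injective order-preserving maps $[m]\to[n]$, and $x\delta^j_m$ corresponds to precomposition with the coface $\delta^j_m:[m-1]\to[m]$ missing $j$. For an $\omega$-category $C$, $\lambda(C)_k$ is the free abelian group on $k$-cells of $C$ modulo the subgroup generated by $x\star_j y-x-y$ ($0\le j<k$, composite defined); $[x]$ denotes the class of $x$ (identity cells have class $0$). *)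

(* Strict globular omega-categories in Street's single-sorted
   presentation: a k-cell is a cell x with src k x = x (lower-dimensional cells
   are thus their own iterated identities). *)
From HB Require Import structures.
From mathcomp Require Import all_boot all_order all_algebra.
Set Implicit Arguments. Unset Strict Implicit. Unset Printing Implicit Defensive.
Import GRing.Theory Num.Theory.

(* Raw data: cells, iterated sources/targets s_p, t_p, and the p-composition.
   comp p y x stands for y *_p x, meaningful when src p y = tgt p x. *)
Record omegaCat := OmegaCat {
  cell :> eqType;
  src : nat -> cell -> cell;
  tgt : nat -> cell -> cell;
  comp : nat -> cell -> cell -> cell
}.

Arguments src {o}. Arguments tgt {o}. Arguments comp {o}.

Definition is_omegaCat (C : omegaCat) : Prop :=
  (forall p q (x : C), (p < q)%N ->
     [/\ src p (src q x) = src p x, src p (tgt q x) = src p x,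
         tgt p (src q x) = tgt p x & tgt p (tgt q x) = tgt p x]) /\
  (forall p q (x : C), (q <= p)%N ->
     [/\ src p (src q x) = src q x, src p (tgt q x) = tgt q x,
         tgt p (src q x) = src q x & tgt p (tgt q x) = tgt q x]) /\
  (forall x : C, exists n, src n x = x) /\
  (forall p (y x : C), src p y = tgt p x ->
     src p (comp p y x) = src p x /\ tgt p (comp p y x) = tgt p y) /\
  (forall p q (y x : C), src p y = tgt p x -> (p < q)%N ->
     src q (comp p y x) = comp p (src q y) (src q x) /\
     tgt q (comp p y x) = comp p (tgt q y) (tgt q x)) /\
  (forall p q (y x : C), src p y = tgt p x -> (q < p)%N ->
     src q (comp p y x) = src q y /\ tgt q (comp p y x) = tgt q y) /\
  (forall p (x : C), comp p (tgt p x) x = x /\ comp p x (src p x) = x) /\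
  (forall p (z y x : C), src p z = tgt p y -> src p y = tgt p x ->
     comp p (comp p z y) x = comp p z (comp p y x)) /\
  (forall p q (y' y x' x : C), (p < q)%N ->
     src q y' = tgt q y -> src q x' = tgt q x -> src p y' = tgt p x' ->
     comp p (comp q y' y) (comp q x' x) = comp q (comp p y' x') (comp p y x)).

Definition is_functor (C D : omegaCat) (f : C -> D) : Prop :=
  (forall p x, f (src p x) = src p (f x)) /\
  (forall p x, f (tgt p x) = tgt p (f x)) /\
  (forall p y x, src p y = tgt p x -> f (comp p y x) = comp p (f y) (f x)).

Section Expansion.
Variables (C : omegaCat) (o : C) (xi : C -> C).

Fixpoint chain (j : nat) (z x : C) : C :=
  match j with
  | 0 => z
  | j'.+1 => comp j' (chain j' z x) (xi (src j' x))
  end.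

Definition xisrc (k : nat) (x : C) : C :=
  match k with 0 => o | k'.+1 => xi (tgt k' x) end.

Definition is_expansion : Prop :=
  src 0 o = o /\
  (forall k (x : C), src k x = x ->
     [/\ src k.+1 (xi x) = xi x, src k (xi x) = xisrc k x
       & tgt k (xi x) = chain k x x]) /\
  (forall p (y x : C), src p y = tgt p x ->
     xi (comp p y x) = comp p.+1 (comp p (chain p (tgt p.+1 y) x) (xi x)) (xi y)) /\
  (* xi_{1_u} = 1_{xi_u} is automatic in the single-sorted presentation *)
  (forall u : C, xi (xi u) = xi u) /\
  xi o = o.
End Expansion.

Definition is_exp_morph (D E : omegaCat) (oD : D) (xiD : D -> D)
  (oE : E) (xiE : E -> E) (h : D -> E) : Prop :=
  is_functor h /\ h oD = oE /\ (forall x, h (xiD x) = xiE (h x)).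

Definition is_free_exp (C D : omegaCat) (oD : D) (xiD : D -> D) (eta : C -> D) : Prop :=
  is_functor eta /\
  forall (E : omegaCat) (oE : E) (xiE : E -> E),
    is_omegaCat E -> is_expansion oE xiE ->
    forall g : C -> E, is_functor g ->
    exists h : D -> E,
      [/\ is_exp_morph oD xiD oE xiE h, (forall x, h (eta x) = g x)
        & forall h' : D -> E, is_exp_morph oD xiD oE xiE h' ->
            (forall x, h' (eta x) = g x) -> forall y, h' y = h y].

Definition emptyCat : omegaCat :=
  @OmegaCat void (fun _ x => x) (fun _ x => x) (fun _ y _ => y).

Definition fromEmpty (D : omegaCat) (v : emptyCat) : D :=
  match v : void with end.

Section Generators.
Local Unset Implicit Arguments.
Variables (O : nat -> omegaCat) (oo : forall k, O k) (xi : forall k, O k -> O k)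
          (eta : forall k, O k -> O k.+1).

Fixpoint etaTo (n i : nat) {struct n} : O (Nat.sub n i) -> O n :=
  match n, i return O (Nat.sub n i) -> O n with
  | 0, _ => fun x => x
  | n'.+1, 0 => fun x => x
  | n'.+1, i'.+1 => fun x => @eta n' (etaTo n' i' x)
  end.

(* genO n c l = < l_0 - c, ..., l_m - c > in O_n *)
Fixpoint genO (n c : nat) (l : seq nat) {struct l} : O n :=
  match l with
  | [::] => @oo n (* junk: not used *)
  | i0 :: rest =>
      etaTo n (i0 - c)
        (match rest with
         | [::] => @oo (Nat.sub n (i0 - c))
         | _ :: _ => @xi _ (genO (Nat.sub n (i0 - c)) i0 rest)
         end)
  end.

Definition gen (n : nat) (l : seq nat) : O n := genO n 0 l.
End Generators.
Arguments etaTo {O} eta n i.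
Arguments genO {O} oo xi eta n c l.
Arguments gen {O} oo xi eta n l.

Definition face (l : seq nat) (j : nat) : seq nat := take j l ++ drop j.+1 l.

(* lambda(C)_k: classes of formal integer combinations of k-cells, modulo the
   subgroup generated by x *_j y - x - y (j < k).  Formal combinations are
   represented as (finitely supported) functions C -> int. *)
Definition delta (C : omegaCat) (x : C) : C -> int := fun z => Posz (z == x).

Inductive lam_rel (C : omegaCat) (k : nat) : (C -> int) -> Prop :=
| lam_gen j (x y : C) : (j < k)%N -> src k x = x -> src k y = y -> src j x = tgt j y ->
    lam_rel k (fun z => (delta (comp j x y) z - delta x z - delta y z)%R)
| lam_zero : lam_rel k (fun _ => 0%R)
| lam_add f g : lam_rel k f -> lam_rel k g -> lam_rel k (fun z => (f z + g z)%R)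
| lam_opp f : lam_rel k f -> lam_rel k (fun z => (- f z)%R).

Definition lam_eq (C : omegaCat) (k : nat) (a b : C -> int) : Prop :=
  exists g, lam_rel k g /\ forall z, (a z - b z)%R = g z.

From mathcomp Require Import all_boot all_order all_algebra.
From mathcomp Require Import zify.
Set Implicit Arguments. Unset Strict Implicit. Unset Printing Implicit Defensive.
Import GRing.Theory.

(* Generators are built from the origin by the expansions and the units:
   <0, i_1, ..., i_m> = xi <i_1, ..., i_m> and <i_0 + 1, ..., i_m + 1> = eta <i_0, ..., i_m>.
   The units are functors, and xi carries the defining relations of lambda in
   degree k to relations in degree k + 1, because the expansion axiom writes
   xi (y *_j x) as a composite of xi y, xi x and a (j+1)-cell, which vanishes in
   degree k + 1.  For a k-cell y, s_k (xi y) = xi (t_{k-1} y) while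
   t_k (xi y) = y *_0 xi s_0 y *_1 ... *_{k-1} xi s_{k-1} y has class
   [y] + [xi s_{k-1} y].  So the formula for <0, i_1, ..., i_m> follows from
   the one for <i_1, ..., i_m>, each face index shifting parity. *)

Section LambdaRelation.
Variables (C : omegaCat) (k : nat).
Implicit Types a b c : C -> int.

Lemma lam_eq_ext a a' b b' : (forall z, a z = a' z) -> (forall z, b z = b' z) ->
  lam_eq k a b -> lam_eq k a' b'.
Proof. by move=> ea eb [g [hg e]]; exists g; split=> // z; rewrite -ea -eb. Qed.

Lemma lam_eq_refl a : lam_eq k a a.
Proof. by exists (fun _ => 0%R); split=> [|z]; [exact: lam_zero | rewrite subrr]. Qed.

Lemma lam_eq_sym a b : lam_eq k a b -> lam_eq k b a.
Proof.
by move=> [g [hg e]]; exists (fun z => - g z)%R; split=> [|z]; [exact: lam_opp | rewrite -e opprB].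
Qed.

Lemma lam_eq_trans a b c : lam_eq k a b -> lam_eq k b c -> lam_eq k a c.
Proof.
move=> [g [hg e]] [g' [hg' e']]; exists (fun z => g z + g' z)%R.
by split=> [|z]; [exact: lam_add | rewrite -e -e' addrA subrK].
Qed.

Lemma lam_eqD a b a' b' : lam_eq k a b -> lam_eq k a' b' ->
  lam_eq k (fun z => a z + a' z)%R (fun z => b z + b' z)%R.
Proof.
move=> [g [hg e]] [g' [hg' e']]; exists (fun z => g z + g' z)%R.
by split=> [|z]; [exact: lam_add | rewrite -e -e' opprD addrACA].
Qed.

Lemma lam_eqKD a b c : lam_eq k (fun z => a z + c z)%R (fun z => b z + c z)%R ->
  lam_eq k a b.
Proof. by move=> [g [hg e]]; exists g; split=> // z; rewrite -e opprD addrACA subrr addr0. Qed.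

Lemma lam_eq_comp j (x y : C) : (j < k)%N -> src k x = x -> src k y = y -> src j x = tgt j y ->
  lam_eq k (delta (comp j x y)) (fun z => delta x z + delta y z)%R.
Proof.
move=> hj hx hy hxy; exists (fun z => delta (comp j x y) z - delta x z - delta y z)%R.
by split=> [|z]; [exact: lam_gen | rewrite opprD addrA].
Qed.
End LambdaRelation.

(* Equality in lambda(C)_k of the formal sums of two lists of cells.  Unlike
   functions C -> int, lists can be pushed along maps of cells, and no negative
   coefficients are needed thanks to the cancellation rule. *)
Inductive lam_equiv (C : omegaCat) (k : nat) : seq C -> seq C -> Prop :=
| lam_equiv_comp j x y : (j < k)%N -> src k x = x -> src k y = y -> src j x = tgt j y ->
    lam_equiv k [:: comp j x y] [:: x; y]
| lam_equiv_perm s t : perm_eq s t -> lam_equiv k s t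
| lam_equiv_sym s t : lam_equiv k s t -> lam_equiv k t s
| lam_equiv_trans s t u : lam_equiv k s t -> lam_equiv k t u -> lam_equiv k s u
| lam_equiv_cat s t s' t' : lam_equiv k s t -> lam_equiv k s' t' ->
    lam_equiv k (s ++ s') (t ++ t')
| lam_equiv_cancel s t u : lam_equiv k (s ++ u) (t ++ u) -> lam_equiv k s t.

Definition sum_delta (C : omegaCat) (s : seq C) : C -> int :=
  fun z => (\sum_(x <- s) delta x z)%R.

Lemma lam_equiv_sound (C : omegaCat) k (s t : seq C) :
  lam_equiv k s t -> lam_eq k (sum_delta s) (sum_delta t).
Proof.
rewrite /sum_delta; elim=> {s t} [j x y hj hx hy hxy | s t st | s t _ IH
  | s t u _ IH1 _ IH2 | s t s' t' _ IH1 _ IH2 | s t u _ IH].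
- apply: lam_eq_ext (lam_eq_comp hj hx hy hxy) => z.
    by rewrite big_seq1.
  by rewrite !big_cons big_nil addr0.
- by apply: lam_eq_ext (lam_eq_refl _ _) => // z; apply: perm_big.
- exact: lam_eq_sym.
- exact: lam_eq_trans IH2.
- by apply: lam_eq_ext (lam_eqD IH1 IH2) => z; rewrite big_cat.
- by apply: lam_eqKD; apply: lam_eq_ext IH => z; rewrite big_cat.
Qed.

Lemma lam_eq_delta_sum (C : omegaCat) k (a : C) (f : nat -> C) (P : pred nat) N :
  lam_equiv k [:: a] [seq f j | j <- iota 0 N & P j] ->
  lam_eq k (delta a) (fun z => \sum_(j < N | P j) delta (f j) z)%R.
Proof.
move/lam_equiv_sound; apply: lam_eq_ext => z; rewrite /sum_delta ?big_seq1 //.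
have -> : iota 0 N = index_iota 0 N by rewrite /index_iota subn0.
by rewrite big_map big_filter big_mkord.
Qed.

Section LambdaEquiv.
Variables (C : omegaCat) (k : nat).
Implicit Types s t u : seq C.

Lemma lam_equiv_refl s : lam_equiv k s s.
Proof. exact/lam_equiv_perm/perm_refl. Qed.

Lemma lam_equiv_catl s t u : lam_equiv k s t -> lam_equiv k (s ++ u) (t ++ u).
Proof. by move/lam_equiv_cat; apply; apply: lam_equiv_refl. Qed.

Lemma lam_equiv_catr s t u : lam_equiv k s t -> lam_equiv k (u ++ s) (u ++ t).
Proof. exact/lam_equiv_cat/lam_equiv_refl. Qed.

Lemma lam_equiv_map (D : omegaCat) (f : C -> D) s t :
  is_functor f -> lam_equiv k s t -> lam_equiv k (map f s) (map f t).
Proof.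
move=> [fs [ft fc]]; elim=> {s t} [j x y hj hx hy hxy | s t st | s t _ IH
  | s t u _ IH1 _ IH2 | s t s' t' _ IH1 _ IH2 | s t u _ IH] /=.
- by rewrite fc //; apply: lam_equiv_comp; rewrite -?fs -?ft ?hx ?hy ?hxy.
- exact/lam_equiv_perm/perm_map.
- exact: lam_equiv_sym.
- exact: lam_equiv_trans IH2.
- by rewrite !map_cat; apply: lam_equiv_cat.
- by apply: (@lam_equiv_cancel _ _ _ _ (map f u)); rewrite -!map_cat.
Qed.
End LambdaEquiv.

Section OmegaCategory.
Variable C : omegaCat.
Hypothesis HC : is_omegaCat C.
Implicit Types x y z : C.

Lemma src_src_lt p q x : p < q -> src p (src q x) = src p x.
Proof. by case: HC => H _ h; case: (H p q x h). Qed.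
Lemma src_tgt_lt p q x : p < q -> src p (tgt q x) = src p x.
Proof. by case: HC => H _ h; case: (H p q x h). Qed.
Lemma tgt_src_lt p q x : p < q -> tgt p (src q x) = tgt p x.
Proof. by case: HC => H _ h; case: (H p q x h). Qed.
Lemma tgt_tgt_lt p q x : p < q -> tgt p (tgt q x) = tgt p x.
Proof. by case: HC => H _ h; case: (H p q x h). Qed.
Lemma src_src_ge p q x : q <= p -> src p (src q x) = src q x.
Proof. by case: HC => _ [H _] h; case: (H p q x h). Qed.
Lemma src_tgt_ge p q x : q <= p -> src p (tgt q x) = tgt q x.
Proof. by case: HC => _ [H _] h; case: (H p q x h). Qed.
Lemma tgt_src_ge p q x : q <= p -> tgt p (src q x) = src q x.
Proof. by case: HC => _ [H _] h; case: (H p q x h). Qed.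
Lemma tgt_tgt_ge p q x : q <= p -> tgt p (tgt q x) = tgt q x.
Proof. by case: HC => _ [H _] h; case: (H p q x h). Qed.
Lemma src_comp_gt p q y x : src p y = tgt p x -> p < q ->
  src q (comp p y x) = comp p (src q y) (src q x).
Proof. by case: HC => _ [_ [_ [_ [H _]]]] h h'; case: (H p q y x h h'). Qed.
Lemma comp_tgtl p x : comp p (tgt p x) x = x.
Proof. by case: HC => _ [_ [_ [_ [_ [_ [H _]]]]]]; case: (H p x). Qed.

Lemma tgt_tgt_le p q x : q <= p -> tgt q (tgt p x) = tgt q x.
Proof. by rewrite leq_eqVlt => /predU1P[->|]; [rewrite tgt_tgt_ge | apply: tgt_tgt_lt]. Qed.

Lemma cell_le d e x : src d x = x -> d <= e -> src e x = x.
Proof. by move=> hx he; rewrite -hx src_src_ge. Qed.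

Lemma cell_tgt d e x : src d x = x -> d <= e -> tgt e x = x.
Proof. by move=> hx he; rewrite -hx tgt_src_ge. Qed.

(* Lower-dimensional cells are identities, whose classes vanish: z = z *_j z. *)
Lemma lam_equiv_id k j z : j < k -> src j z = z -> lam_equiv k [:: z] [::].
Proof.
move=> hjk hz; have hzk := cell_le hz (ltnW hjk).
have hzz : src j z = tgt j z by rewrite hz (cell_tgt hz).
have := lam_equiv_comp hjk hzk hzk hzz.
rewrite -{1}[z in comp j z](cell_tgt hz (leqnn j)) comp_tgtl => h.
by apply/lam_equiv_sym/(@lam_equiv_cancel _ _ _ _ [:: z]).
Qed.

Section Expansion.
Variables (o : C) (xi : C -> C).
Hypothesis HE : is_expansion o xi.

Lemma src_origin : src 0 o = o.
Proof. by case: HE. Qed.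

Lemma expansion_cell k x : src k x = x ->
  [/\ src k.+1 (xi x) = xi x, src k (xi x) = xisrc o xi k x & tgt k (xi x) = chain xi k x x].
Proof. by case: HE => _ [H _]; apply: H. Qed.

Lemma xi_comp p y x : src p y = tgt p x ->
  xi (comp p y x) = comp p.+1 (comp p (chain xi p (tgt p.+1 y) x) (xi x)) (xi y).
Proof. by case: HE => _ [_ [H _]]; apply: H. Qed.

Lemma xi_cell d x : src d x = x -> src d.+1 (xi x) = xi x.
Proof. by case/expansion_cell. Qed.

Lemma src_xi d x q : src d x = x -> q <= d -> src q (xi x) = xisrc o xi q (tgt q x).
Proof.
elim: d x q => [|d IH] x q hx.
  by rewrite leqn0 => /eqP->; case: (expansion_cell hx) => _ -> _; rewrite (cell_tgt hx).
rewrite leq_eqVlt => /predU1P[->|hq].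
  by case: (expansion_cell hx) => _ -> _; rewrite (cell_tgt hx).
rewrite -(src_src_lt _ hq); case: (expansion_cell hx) => _ -> _ /=.
by rewrite (IH _ q (src_tgt_ge _ (leqnn d))) ?tgt_tgt_le.
Qed.

Lemma tgt_xi d x q : src d x = x -> q <= d -> tgt q (xi x) = chain xi q (tgt q x) (tgt q x).
Proof.
move=> hx; rewrite leq_eqVlt => /predU1P[->|hq].
  by case: (expansion_cell hx) => _ _ ->; rewrite (cell_tgt hx).
rewrite -(tgt_src_lt _ (ltnSn q)) (src_xi hx hq) /= tgt_tgt_lt //.
by case: (expansion_cell (src_tgt_ge x (leqnn q))).
Qed.

Definition src_agree q (z x : C) := forall r, r < q -> src r z = src r x.

Lemma chain_ext q z x x' : src_agree q x x' -> chain xi q z x = chain xi q z x'.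
Proof.
by elim: q => [|q IH] hx //=; rewrite IH ?hx // => r hr; apply/hx/ltnW.
Qed.

Lemma src_chain_ge q z x e : src_agree q z x -> q <= e ->
  src e (chain xi q z x) = chain xi q (src e z) x.
Proof.
elim: q e => [|q IH] e hzx he //=.
have hzx' : src_agree q z x by move=> r hr; apply/hzx/ltnW.
rewrite src_comp_gt //; last first.
  rewrite (IH q hzx' (leqnn q)) (tgt_xi (src_src_ge _ (leqnn q)) (leqnn q)) tgt_src_ge //.
  by rewrite (hzx q (ltnSn q)); apply: chain_ext => r hr; rewrite src_src_lt.
by rewrite (IH e hzx' (ltnW he)) (cell_le (xi_cell (src_src_ge _ (leqnn q)))).
Qed.

Lemma src_chain q z x : src_agree q.+1 z x -> src q (chain xi q z x) = tgt q (xi (src q x)).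
Proof.
move=> hzx; have hzx' : src_agree q z x by move=> r hr; apply/hzx/ltnW.
rewrite (src_chain_ge hzx' (leqnn q)) (tgt_xi (src_src_ge _ (leqnn q)) (leqnn q)).
rewrite tgt_src_ge // (hzx q (ltnSn q)).
by apply: chain_ext => r hr; rewrite src_src_lt.
Qed.

(* xi (y *_j x) = (c *_j xi x) *_{j+1} xi y where the chain c is a (j+1)-cell,
   hence vanishes in degree k+1 > j+1. *)
Lemma lam_equiv_xi k s t : lam_equiv k s t -> lam_equiv k.+1 (map xi s) (map xi t).
Proof.
elim=> {s t} [j y x hj hy hx hyx | s t st | s t _ IH
  | s t u _ IH1 _ IH2 | s t s' t' _ IH1 _ IH2 | s t u _ IH] /=.
- rewrite (xi_comp hyx).
  set c := chain xi j (tgt j.+1 y) x; set a := comp j c (xi x).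
  have hc : src_agree j (tgt j.+1 y) x.
    by move=> r hr; rewrite src_tgt_lt 1?ltnW // -(src_src_lt y hr) hyx src_tgt_lt.
  have hc1 : src j.+1 c = c by rewrite (src_chain_ge hc (leqnSn j)) src_tgt_ge.
  have hck : src k.+1 c = c by apply: cell_le hc1 _; apply: ltnW.
  have hcx : src j c = tgt j (xi x).
    rewrite (src_chain_ge hc (leqnn j)) src_tgt_lt // hyx (tgt_xi hx (ltnW hj)).
    by apply: chain_ext => r hr; rewrite src_tgt_lt.
  have hak : src k.+1 a = a by rewrite src_comp_gt ?hck ?(xi_cell hx) // ltnW.
  have hay : src j.+1 a = tgt j.+1 (xi y).
    rewrite src_comp_gt // hc1 (src_xi hx hj) /= tgt_tgt_lt // (tgt_xi hy hj) /=.
    by rewrite src_tgt_lt // hyx; congr comp; apply: chain_ext => r hr; rewrite hc.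
  apply: lam_equiv_trans
    (@lam_equiv_comp _ k.+1 j.+1 a (xi y) hj hak (xi_cell hy) hay) _.
  apply: lam_equiv_trans (lam_equiv_catl [:: xi y]
    (@lam_equiv_comp _ k.+1 j c (xi x) (ltnW hj) hck (xi_cell hx) hcx)) _.
  apply: lam_equiv_trans
    (lam_equiv_catl [:: xi x; xi y] (@lam_equiv_id k.+1 j.+1 c hj hc1)) _.
  by apply: lam_equiv_perm; rewrite (perm_catC [:: xi x]) perm_refl.
- exact/lam_equiv_perm/perm_map.
- exact: lam_equiv_sym.
- exact: lam_equiv_trans IH2.
- by rewrite !map_cat; apply: lam_equiv_cat.
- by apply: (@lam_equiv_cancel _ _ _ _ (map xi u)); rewrite -!map_cat.
Qed.

(* The lower xi's in the chain are identities. *)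
Lemma lam_equiv_chain_lt k q y : src k y = y -> q < k ->
  lam_equiv k [:: chain xi q y y] [:: y].
Proof.
move=> hy; elim: q => [|q IH] hq; first exact: lam_equiv_refl.
have hq' : src q (src q y) = src q y by rewrite src_src_ge.
have hck : src k (chain xi q y y) = chain xi q y y.
  by rewrite (src_chain_ge (fun _ _ => erefl) (ltnW (ltnW hq))) hy.
apply: lam_equiv_trans (lam_equiv_comp (ltnW hq) hck
  (cell_le (xi_cell hq') (ltnW hq)) (src_chain (fun _ _ => erefl))) _.
apply: lam_equiv_trans (lam_equiv_cat (IH (ltnW hq)) (lam_equiv_id hq (xi_cell hq'))) _.
exact: lam_equiv_refl.
Qed.

Lemma lam_equiv_chain k y : src k.+1 y = y ->
  lam_equiv k.+1 [:: chain xi k.+1 y y] [:: y; xi (src k y)].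
Proof.
move=> hy; have hk : src k (src k y) = src k y by rewrite src_src_ge.
have hck : src k.+1 (chain xi k y y) = chain xi k y y.
  by rewrite (src_chain_ge (fun _ _ => erefl) (leqnSn k)) hy.
apply: lam_equiv_trans (lam_equiv_comp (ltnSn k) hck (xi_cell hk)
  (src_chain (fun _ _ => erefl))) _.
exact: (lam_equiv_catl [:: xi (src k y)] (lam_equiv_chain_lt hy (ltnSn k))).
Qed.
End Expansion.
End OmegaCategory.

Lemma face_map_succ l j : face (map S l) j = map S (face l j).
Proof. by rewrite /face map_cat map_take map_drop. Qed.

Lemma face_cons0 r j : face (0 :: r) j.+1 = 0 :: face r j.
Proof. by []. Qed.

Lemma face_neq0 l j : 1 < size l -> face l j != [::].
Proof.
rewrite -size_eq0 /face size_cat size_take size_drop.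
by set s := size l; case: (ltnP j s); lia.
Qed.

Lemma sorted_ltn_ind (P : nat -> seq nat -> Prop) :
  (forall n, P n [:: 0]) ->
  (forall n r, r != [::] -> P n r -> P n (0 :: r)) ->
  (forall n l, l != [::] -> P n l -> P n.+1 (map S l)) ->
  forall n l, l != [::] -> sorted ltn l -> all (fun i => i <= n) l -> P n l.
Proof.
move=> P0 Pcons0 Psucc n l; move: {2}(n + size l) (leqnn (n + size l)) => N.
elim: N n l => [|N IH] n [|a r] // hN _ hsort /andP[ha hall]; first by rewrite addnS in hN.
case: a => [|i] in hN ha hsort *.
  case: r => [|b r] in hN hsort hall *; first exact: P0.
  apply: Pcons0 => //; apply: IH => //; first by rewrite -ltnS -addnS.
  exact: path_sorted hsort.
case: n ha hN hall => // n ha hN hall.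
have r_pos : all (leq 1) r.
  by apply: sub_all (order_path_min ltn_trans hsort) => j; apply: leq_ltn_trans.
have r_pred : r = map S (map predn r).
  by rewrite -map_comp map_id_in // => j /(allP r_pos) /prednK.
have -> : i.+1 :: r = map S (i :: map predn r) by rewrite /= -r_pred.
apply: Psucc => //; apply: IH => //.
- by rewrite /= size_map -ltnS -addSn.
- by move: hsort; rewrite /= {1}r_pred path_map.
- by rewrite /= -ltnS ha all_map; apply: sub_all hall => -[].
Qed.

Section Generators.
Variables (O : nat -> omegaCat) (oo : forall k, O k) (xi : forall k, O k -> O k)
  (eta : forall k, O k -> O k.+1).
Hypothesis HO : forall k, is_omegaCat (O k).
Hypothesis HX : forall k, is_expansion (oo k) (@xi k).
Hypothesis Heta : forall k, is_functor (@eta k).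

Local Notation gen := (gen oo xi eta).

Lemma src_etaTo n i k x : src k (etaTo eta n i x) = etaTo eta n i (src k x).
Proof.
elim: n i x => [|n IH] [|i] x //=.
by case: (Heta n) => <- _; rewrite IH.
Qed.

Lemma genO_cell n c l : src (size l).-1 (genO oo xi eta n c l) = genO oo xi eta n c l.
Proof.
elim: l n c => [|a [|b r] IH] n c /=; first exact: src_origin (HX n).
  by rewrite src_etaTo (src_origin (HX _)).
by rewrite src_etaTo (xi_cell (HX _) (IH _ a)).
Qed.

Lemma gen_cell n l : src (size l).-1 (gen n l) = gen n l.
Proof. exact: genO_cell. Qed.

Lemma genO_cons2 n c a b r : genO oo xi eta n c [:: a, b & r] =
  etaTo eta n (a - c) (@xi _ (genO oo xi eta (n - (a - c))%coq_nat a (b :: r))).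
Proof. by []. Qed.

Lemma genO_succ n c l : genO oo xi eta n c.+1 (map S l) = genO oo xi eta n c l.
Proof.
elim: l n c => [|a [|b r] IH] n c //.
by rewrite [map S _]/= !genO_cons2 -IH.
Qed.

Lemma gen_map_succ n l : l != [::] -> gen n.+1 (map S l) = @eta n (gen n l).
Proof.
case: l => [|a [|b r]] // _; rewrite /gen; first by rewrite /= subn0.
by rewrite !genO_cons2 !subn0 -[b.+1 :: _]/(map S (b :: r)) genO_succ.
Qed.

Lemma gen_cons0 n r : r != [::] -> gen n (0 :: r) = @xi n (gen n r).
Proof. by case: r => [|b r] // _; case: n. Qed.

Lemma gen_0 n : gen n [:: 0] = oo n.
Proof. by case: n. Qed.

Definition faces (P : pred nat) n l : seq (O n) :=
  [seq gen n (face l j) | j <- iota 0 (size l) & P j].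

Lemma faces_map_succ P n l : 1 < size l ->
  faces P n.+1 (map S l) = map (@eta n) (faces P n l).
Proof.
move=> hl; rewrite /faces size_map -map_comp; apply: eq_map => j /=.
by rewrite face_map_succ gen_map_succ ?face_neq0.
Qed.

Lemma faces_cons0 P n r : 1 < size r ->
  faces P n (0 :: r) =
  (if P 0 then [:: gen n r] else [::]) ++ map (@xi n) (faces (fun j => P j.+1) n r).
Proof.
move=> hr; rewrite /faces /= (iotaDl 1 0) filter_map -!map_comp.
rewrite (@eq_filter _ (preim (addn 1) P) (fun j => P j.+1)) //.
case: (P 0); rewrite /= -map_comp; [congr cons; first by rewrite /face /= drop0 | ];
  by apply: eq_map => j; rewrite /= add1n face_cons0 gen_cons0 ?face_neq0.
Qed.

Lemma eq_faces P Q n l : P =1 Q -> faces P n l = faces Q n l.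
Proof. by move=> PQ; rewrite /faces (eq_filter PQ). Qed.

Lemma gen_boundary n l : l != [::] -> sorted ltn l -> all (fun i => i <= n) l ->
  1 < size l ->
  lam_equiv (size l).-2 [:: src (size l).-2 (gen n l)] (faces odd n l) /\
  lam_equiv (size l).-2 [:: tgt (size l).-2 (gen n l)] (faces (fun j => ~~ odd j) n l).
Proof.
move: n l; apply: sorted_ltn_ind => [n | n r r0 IH | n l l0 IH] //.
- rewrite gen_cons0 // => _; case: r r0 IH => [|b [|c r]] // _ IH.
    have [_ -> ->] := expansion_cell (HX n) (gen_cell n [:: b]).
    by rewrite /faces /= gen_0; split; apply: lam_equiv_refl.
  set y := gen n [:: b, c & r]; have [IHs IHt] := IH isT.
  have [_ -> ->] := expansion_cell (HX n) (gen_cell n [:: b, c & r]).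
  rewrite !faces_cons0 // (@eq_faces (fun j => ~~ odd j.+1) odd _ _ (fun j => negbK _)).
  split.
    exact (lam_equiv_xi (HO n) (HX n) IHt).
  apply: lam_equiv_trans (lam_equiv_chain (HO n) (HX n) (gen_cell n [:: b, c & r])) _.
  exact: lam_equiv_catr [:: y] (lam_equiv_xi (HO n) (HX n) IHs).
- rewrite size_map => hl; have [IHs IHt] := IH hl.
  rewrite gen_map_succ // !faces_map_succ //; case: (Heta n) => fs [ft _].
  rewrite -fs -ft; split.
    exact: lam_equiv_map (Heta n) IHs.
  exact: lam_equiv_map (Heta n) IHt.
Qed.
End Generators.

Theorem mainTheorem11
  (O : nat -> omegaCat) (oo : forall k, O k) (xi : forall k, O k -> O k)
  (eta : forall k, O k -> O k.+1) :
  (forall k, is_omegaCat (O k)) ->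
  (forall k, is_expansion (oo k) (xi k)) ->
  is_free_exp (oo 0) (xi 0) (@fromEmpty (O 0)) ->
  (forall k, is_free_exp (oo k.+1) (xi k.+1) (eta k)) ->
  forall (n m : nat) (l : seq nat),
    (1 <= m)%N -> size l = m.+1 -> sorted ltn l -> all (fun i => i <= n)%N l ->
    let x := gen oo xi eta n l in
    lam_eq m.-1 (delta (src m.-1 x))
      (fun z => (\sum_(j < m.+1 | odd j) delta (gen oo xi eta n (face l j)) z)%R)
    /\
    lam_eq m.-1 (delta (tgt m.-1 x))
      (fun z => (\sum_(j < m.+1 | ~~ odd j) delta (gen oo xi eta n (face l j)) z)%R).
Proof.
move=> HO HX _ Hfree n m l hm hs hsort hall x.
have Heta k : is_functor (eta k) by case: (Hfree k).
have hl : l != [::] by rewrite -size_eq0 hs.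
have hl1 : 1 < size l by rewrite hs.
have [hsrc htgt] := gen_boundary HO HX Heta hl hsort hall hl1.
rewrite /faces hs in hsrc htgt.
split; [exact: lam_eq_delta_sum hsrc | exact: lam_eq_delta_sum htgt].
Qed.
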